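(* Let $X$ be an order continuous rearrangement invariant sequence space with the Fatou property and let $F$ be an Orlicz function. Assume that the Calderón–Lozanovskiĭ class is closed under the Cesàro operator $C$. If $F$ vanishes only at zero and does not satisfy the $\Delta_2(0)$-condition, then the space $C(X_F)$ contains a lattice isometric copy of $\ell_\infty$.
   Context: A rearrangement invariant sequence space is a Banach space $X$ of real sequences with the ideal property ($|x|\le|y|$, $y\in X$ imply $x\in X$, $\|x\|_X\le\|y\|_X$), containing a sequence with all coordinates nonzero, in which equimeasurable sequences have equal norms. Order continuous: every $x\in X$ satisfies $\|x^{(n)}\|_X\to0$ whenever $0\le x^{(n)}\le|x|$, $x^{(n)}\downarrow0$. Fatou property: $0\le x^{(n)}\uparrow x$, $\sup\|x^{(n)}\|_X<\infty$ imply $x\in X$ and $\|x^{(n)}\|_X\uparrow\|x\|_X$. An Orlicz function is a non-decreasing convex $F:[0,\infty)\to[0,\infty]$ with $F(0)=0$. The Calderón–Lozanovskiĭ space $X_F$ consists of sequences $f$ with $\|f\|_{X_F}=\inf\{\lambda>0:\|F(|f|/\lambda)\|_X\le1\}<\infty$; the Calderón–Lozanovskiĭ class is $\{f\in X_F:\|F(|f|)\|_X<\infty\}$, and it is closed under $C$ if $f$ in the class implies $C(|f|)$ is in the class. The discrete Cesàro operator is $C(x)_n=\frac1n\sum_{k=1}^nx_k$, and $C(X_F)=\{x: C(|x|)\in X_F\}$ with norm $\|C(|x|)\|_{X_F}$. $F$ satisfies $\Delta_2(0)$ if there are $K>0$, $u_0>0$ with $F(u_0)>0$ and $F(2u)\le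 KF(u)$ for $0\le u\le u_0$. A lattice isometric copy of $\ell_\infty$ is the image of a linear isometric lattice-homomorphic embedding of $\ell_\infty$. *)

(* Sequences are indexed by nat: x 0 is the paper's x_1. *)
From HB Require Import structures.
From mathcomp Require Import all_boot all_order all_algebra.
From mathcomp Require Import all_classical all_reals all_analysis.
Set Implicit Arguments. Unset Strict Implicit. Unset Printing Implicit Defensive.
Import Order.TTheory GRing.Theory Num.Theory.
Local Open Scope classical_set_scope.
Local Open Scope ring_scope.
Local Open Scope card_scope.

Definition abss {R : realType} (x : nat -> R) : nat -> R := fun n => `|x n|.

Definition equimeasurable {R : realType} (x y : nat -> R) : Prop :=
  forall l : R, 0 < l -> [set n | l < `|x n|] #= [set n | l < `|y n|].

(* A rearrangement invariant Banach sequence space: X is the underlying set of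
   sequences, nrm its norm (relevant on X only). *)
Record ri_space {R : realType} (X : set (nat -> R)) (nrm : (nat -> R) -> R) : Prop := {
  ri_zero : X (fun _ => 0);
  ri_add : forall x y, X x -> X y -> X (fun n => x n + y n);
  ri_scale : forall (a : R) x, X x -> X (fun n => a * x n);
  ri_nrm_ge0 : forall x, X x -> 0 <= nrm x;
  ri_nrm_eq0 : forall x, X x -> nrm x = 0 -> x = (fun _ => 0);
  ri_nrm_hom : forall (a : R) x, X x -> nrm (fun n => a * x n) = `|a| * nrm x;
  ri_nrm_tri : forall x y, X x -> X y -> nrm (fun n => x n + y n) <= nrm x + nrm y;
  ri_complete : forall u : nat -> nat -> R, (forall k, X (u k)) ->
    (forall e : R, 0 < e -> exists N, forall m n, (N <= m)%N -> (N <= n)%N ->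
        nrm (fun i => u m i - u n i) < e) ->
    exists x, X x /\ forall e : R, 0 < e -> exists N, forall n, (N <= n)%N ->
        nrm (fun i => u n i - x i) < e;
  ri_ideal : forall x y, X y -> (forall n, `|x n| <= `|y n|) -> X x /\ nrm x <= nrm y;
  ri_full : exists x, X x /\ forall n, x n != 0;
  ri_rearr : forall x y, X y -> equimeasurable x y -> X x /\ nrm x = nrm y
}.

Definition order_continuous {R : realType} (X : set (nat -> R)) (nrm : (nat -> R) -> R) : Prop :=
  forall x, X x -> forall xs : nat -> nat -> R,
    (forall k n, 0 <= xs k n <= `|x n|) ->
    (forall k n, xs k.+1 n <= xs k n) ->
    (forall n, (fun k => xs k n) @ \oo --> 0) ->
    (fun k => nrm (xs k)) @ \oo --> 0.

Definition fatou_property {R : realType} (X : set (nat -> R)) (nrm : (nat -> R) -> R) : Prop :=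
  forall (x : nat -> R) (xs : nat -> nat -> R),
    (forall k n, 0 <= xs k n) ->
    (forall k n, xs k n <= xs k.+1 n) ->
    (forall n, (fun k => xs k n) @ \oo --> (x n : R^o)) ->
    (forall k, X (xs k)) -> (exists M : R, forall k, nrm (xs k) <= M) ->
    X x /\ (forall k, nrm (xs k) <= nrm (xs k.+1)) /\ (fun k => nrm (xs k)) @ \oo --> (nrm x : R^o).

(* Orlicz function F : [0,oo) -> [0,oo] (values at negative arguments irrelevant) *)
Definition orlicz {R : realType} (F : R -> \bar R) : Prop :=
  F 0 = 0%E /\
  (forall u : R, 0 <= u -> (0 <= F u)%E) /\
  (forall u v : R, 0 <= u -> u <= v -> (F u <= F v)%E) /\
  (forall u v t : R, 0 <= u -> 0 <= v -> 0 <= t -> t <= 1 ->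
     (F (t * u + (1 - t) * v)%R <= t%:E * F u + (1 - t)%:E * F v)%E).

Definition inXe {R : realType} (X : set (nat -> R)) (g : nat -> \bar R) : Prop :=
  (forall n, g n \is a fin_num) /\ X (fun n => fine (g n)).
Definition nrmXe {R : realType} (nrm : (nat -> R) -> R) (g : nat -> \bar R) : R :=
  nrm (fun n => fine (g n)).

Definition XF_adm {R : realType} (X : set (nat -> R)) (nrm : (nat -> R) -> R)
  (F : R -> \bar R) (f : nat -> R) : set R :=
  [set l | 0 < l /\ inXe X (fun n => F (`|f n| / l)) /\
           nrmXe nrm (fun n => F (`|f n| / l)) <= 1].

Definition XF {R : realType} (X : set (nat -> R)) nrm (F : R -> \bar R) : set (nat -> R) :=
  [set f | XF_adm X nrm F f !=set0].
Definition XF_norm {R : realType} (X : set (nat -> R)) nrm (F : R -> \bar R) (f : nat -> R) : R :=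
  inf (XF_adm X nrm F f).

Definition CL_class {R : realType} (X : set (nat -> R)) nrm (F : R -> \bar R) : set (nat -> R) :=
  [set f | XF X nrm F f /\ inXe X (fun n => F `|f n|)].

(* discrete Cesaro operator: C(x)_n = 1/n sum_{k=1}^n x_k, shifted to index 0 *)
Definition cesaro {R : realType} (x : nat -> R) : nat -> R :=
  fun n => (n.+1%:R)^-1 * \sum_(k < n.+1) x k.

Definition CL_closed_cesaro {R : realType} (X : set (nat -> R)) nrm (F : R -> \bar R) : Prop :=
  forall f, CL_class X nrm F f -> CL_class X nrm F (cesaro (abss f)).

Definition CXF {R : realType} (X : set (nat -> R)) nrm (F : R -> \bar R) : set (nat -> R) :=
  [set x | XF X nrm F (cesaro (abss x))].
Definition CXF_norm {R : realType} (X : set (nat -> R)) nrm (F : R -> \bar R) (x : nat -> R) : R :=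
  XF_norm X nrm F (cesaro (abss x)).

Definition Delta2_0 {R : realType} (F : R -> \bar R) : Prop :=
  exists K u0 : R, 0 < K /\ 0 < u0 /\ (0 < F u0)%E /\
    forall u : R, 0 <= u -> u <= u0 -> (F (2 * u)%R <= K%:E * F u)%E.

Definition linf {R : realType} (a : nat -> R) : Prop := exists M : R, forall n, `|a n| <= M.
Definition linf_norm {R : realType} (a : nat -> R) : R := sup (range (fun n => `|a n|)).

Definition contains_lattice_isometric_linf {R : realType}
  (Y : set (nat -> R)) (nY : (nat -> R) -> R) : Prop :=
  exists T : (nat -> R) -> (nat -> R),
    (forall a, linf a -> Y (T a)) /\
    (forall a b, linf a -> linf b -> T (fun n => a n + b n) = (fun n => T a n + T b n)) /\
    (forall (c : R) a, linf a -> T (fun n => c * a n) = (fun n => c * T a n)) /\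
    (forall a b, linf a -> linf b ->
       T (fun n => Num.max (a n) (b n)) = (fun n => Num.max (T a n) (T b n))) /\
    (forall a, linf a -> nY (T a) = linf_norm a).

From Pilot Require Import Defs.
From HB Require Import structures.
From mathcomp Require Import all_boot all_order all_algebra.
From mathcomp Require Import all_classical all_reals all_analysis.
From mathcomp Require Import ring lra zify.
Import Order.TTheory GRing.Theory Num.Theory.
Set Implicit Arguments. Unset Strict Implicit. Unset Printing Implicit Defensive.
Local Open Scope classical_set_scope.
Local Open Scope ring_scope.

(* Failure of Delta_2 at 0 gives, for every k, arbitrarily small u_k with
   F (theta_k u_k) much larger than F (u_k), where theta_k = (k+2)/(k+1) -> 1.
   Since X is order continuous with the Fatou property, the norms of
   indicators of intervals [lo, hi) increase without bound in steps of at most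
   |e_1|, so one can place consecutive blocks [a_k, a_{k+1}) on which
   |F(u_k) 1_block| <= 2^{-k-1} while |F(theta_k u_k) 1_far| > 1/2 on the far
   part [(k+2) a_k, a_{k+1}) of the block.  The step function w = u_k on block k
   is in the Calderon-Lozanovskii class, hence so is C(w), and by order
   continuity some tail w_M satisfies |F(C(w_M))| < 1.

   Putting b_i on the (infinitely many) blocks k with log2(k+1) = i defines
   T b = b_{i(k)} w_M, obviously a lattice homomorphism.  From
   C|Tb| <= |b|_oo C(w_M) we get |Tb| <= |b|_oo.  Conversely, on the far part
   of block k the Cesaro mean of |Tb| is at least |b_i| u_k / theta_k, so for
   lambda < |b_i| and k large F(C|Tb| / lambda) >= F(theta_k u_k) there, which
   is incompatible with the tails of F(C|Tb| / lambda) in X being small. *)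

(* [cesaro] alone would refer to a lemma of mathcomp-analysis. *)
Local Notation cesaro := Defs.cesaro.

Definition chi {R : realType} (lo hi : nat) : nat -> R :=
  fun n => if (lo <= n < hi)%N then 1 else 0.

Definition tail {R : realType} (m : nat) (x : nat -> R) : nat -> R :=
  fun n => if (m <= n)%N then x n else 0.

Definition theta {R : realType} (k : nat) : R := k.+2%:R / k.+1%:R.

Section RealFacts.
Variable R : realType.

Lemma exists_expr_ge (t c : R) : 1 < t -> exists m, c <= t ^+ m.
Proof.
move=> t1; have bern m : 1 + m%:R * (t - 1) <= t ^+ m.
  elim: m => [|m IH]; first by rewrite mul0r addr0 expr0.
  rewrite exprS -natr1; have : 0 <= m%:R * (t - 1) by rewrite mulr_ge0 // subr_ge0 ltW.
  nra.
have h0 : 0 <= `|c| / (t - 1) by apply: divr_ge0 => //; lra.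
exists (Num.Def.archi_bound (`|c| / (t - 1))).
have := archi_boundP h0; rewrite ltr_pdivrMr; last lra.
have := bern (Num.Def.archi_bound (`|c| / (t - 1))); have := ler_norm c; lra.
Qed.

Lemma fin_num_fine_le (x y : \bar R) : (0 <= x)%E -> (x <= y)%E -> y \is a fin_num ->
  x \is a fin_num /\ fine x <= fine y.
Proof.
move=> x0 xy yf; have xf : x \is a fin_num.
  by rewrite ge0_fin_numE // (le_lt_trans xy) // ltey_eq yf.
by split => //; apply: fine_le.
Qed.

Lemma exists_crossing (s : nat -> R) (t d : R) : s 0%N < t ->
  (forall L, s L.+1 <= s L + d) -> (exists L, t <= s L) ->
  exists2 L, (0 < L)%N & t <= s L <= t + d.
Proof.
move=> s0 sS exL; case: (ex_minnP exL) => L tL Lmin.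
have [L' eL] : exists L', L = L'.+1.
  by case: L tL {Lmin} => [|L' _]; [rewrite leNgt s0 | exists L'].
have sL' : s L' < t by rewrite ltNge; apply/negP => /Lmin; rewrite eL ltnn.
exists L; first by rewrite eL.
by rewrite tL /=; have := sS L'; rewrite -eL; lra.
Qed.

Lemma theta_gt1 k : 1 < theta k :> R.
Proof. by rewrite /theta ltr_pdivlMr ?ltr0n // mul1r ltr_nat. Qed.

Lemma theta_sq_le (c : R) : 1 < c -> exists K, forall k, (K <= k)%N -> theta k ^+ 2 <= c.
Proof.
move=> c1; have h0 : 0 <= 3 / (c - 1) by rewrite divr_ge0 //; lra.
exists (Num.Def.archi_bound (3 / (c - 1))) => k hk.
have : 3 < k.+1%:R * (c - 1).
  rewrite -ltr_pdivrMr; last lra.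
  by apply: lt_le_trans (archi_boundP h0) _; rewrite ler_nat; lia.
rewrite /theta expr_div_n ler_pdivrMr ?exprn_gt0 ?ltr0n // -(@natr1 R k.+1).
have : 1 <= k.+1%:R :> R by rewrite ler1n.
set x := k.+1%:R => x1 x3; rewrite !expr2; nra.
Qed.

Lemma theta_inv_le (k a n : nat) : (k.+2 * a <= n)%N ->
  (theta k)^-1 <= (n.+1 - a)%:R / n.+1%:R :> R.
Proof.
move=> h; rewrite /theta invf_div ler_pdivrMr ?ltr0n // mulrAC ler_pdivlMr ?ltr0n //.
by rewrite -!natrM ler_nat; nia.
Qed.

Lemma cesaro_le (f g : nat -> R) n : (forall m, f m <= g m) -> cesaro f n <= cesaro g n.
Proof.
move=> fg; rewrite /Defs.cesaro ler_wpM2l ?invr_ge0 //.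
by apply: ler_sum => i _; apply: fg.
Qed.

Lemma cesaro_abss_ge0 (f : nat -> R) n : 0 <= cesaro (abss f) n.
Proof.
by rewrite /Defs.cesaro mulr_ge0 ?invr_ge0 // sumr_ge0 // => i _; rewrite /abss.
Qed.

Lemma cesaro_ge_block (x : nat -> R) (a n : nat) (v : R) : (a <= n)%N ->
  (forall m, 0 <= x m) -> (forall m, (a <= m <= n)%N -> v <= x m) ->
  (n.+1 - a)%:R / n.+1%:R * v <= cesaro x n.
Proof.
move=> an x0 xv; rewrite /Defs.cesaro mulrAC [leRHS]mulrC ler_pM2r ?invr_gt0 ?ltr0n //.
rewrite -(big_mkord xpredT x).
rewrite (big_cat_nat (leq0n a)) ?(leq_trans an) //= -[X in X <= _]add0r.
apply: lerD; first by rewrite sumr_ge0.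
rewrite mulr_natl -sumr_const_nat; apply: ler_sum_nat => m /andP[am mn].
by apply: xv; rewrite am -ltnS.
Qed.

Lemma linf_norm_ub (b : nat -> R) : linf b -> forall n, `|b n| <= linf_norm b.
Proof.
move=> [Mb hMb] n; apply: sup_upper_bound; last by exists n.
by split; [exists `|b 0%N|, 0%N | exists Mb => _ [m _ <-]].
Qed.

Lemma linf_norm_approx (b : nat -> R) l : l < linf_norm b -> exists i, l < `|b i|.
Proof.
have ne : range (fun n => `|b n|) !=set0 by exists `|b 0%N|, 0%N.
by move=> /(sup_gt ne) [_ [i _ <-]]; exists i.
Qed.

Lemma inf_ray (S : set R) s : (forall l, s < l -> S l) -> (forall l, S l -> s <= l) ->
  inf S = s.
Proof.
move=> up lo; have lbS : has_lbound S by exists s.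
apply/eqP; rewrite eq_le; apply/andP; split.
  by apply/ler_addgt0Pr => e e0; apply: ge_inf lbS _ _; apply: up; rewrite ltrDl.
by apply: lb_le_inf; [exists (s + 1); apply: up; rewrite ltrDl | exact: lo].
Qed.

End RealFacts.

Lemma logn2_fiber i j : exists2 k, (j <= k)%N & logn 2 k.+1 = i.
Proof.
have hp : (0 < 2 ^ i * j.*2.+1)%N by rewrite muln_gt0 expn_gt0.
exists (2 ^ i * j.*2.+1).-1; rewrite ?prednK //.
  rewrite -ltnS prednK // (leq_trans _ (leq_pmull _ _)) ?expn_gt0 //.
  by rewrite ltnS -addnn leq_addr.
rewrite lognM ?expn_gt0 // pfactorK // logn_coprime ?addn0 //.
by rewrite coprime2n /= odd_double.
Qed.

Section OrliczFunction.
Variables (R : realType) (F : R -> \bar R).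
Hypothesis hF : orlicz F.

Lemma orlicz0 : F 0 = 0%E.
Proof. by case: hF. Qed.

Lemma orlicz_ge0 u : 0 <= u -> (0 <= F u)%E.
Proof. by case: hF => _ [+ _]; apply. Qed.

Lemma orlicz_le u v : 0 <= u -> u <= v -> (F u <= F v)%E.
Proof. by case: hF => _ [_ [+ _]]; apply. Qed.

Lemma fine_orlicz_ge0 u : 0 <= u -> 0 <= fine (F u).
Proof. by move=> u0; rewrite fine_ge0 // orlicz_ge0. Qed.

Lemma orlicz_fine_le u v : 0 <= u -> u <= v -> F v \is a fin_num ->
  F u \is a fin_num /\ fine (F u) <= fine (F v).
Proof. by move=> u0 uv; apply: fin_num_fine_le; [exact: orlicz_ge0 | exact: orlicz_le]. Qed.

Lemma orlicz_le_chord b x : 0 < b -> 0 <= x <= b -> (F x <= (x / b)%:E * F b)%E.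
Proof.
move=> b0 /andP[x0 xb]; case: hF => F0 [_ [_ Fconv]].
have t0 : 0 <= x / b by rewrite divr_ge0 // ltW.
have t1 : x / b <= 1 by rewrite ler_pdivrMr // mul1r.
have := Fconv b 0 (x / b) (ltW b0) (lexx 0) t0 t1.
by rewrite mulr0 addr0 mulfVK ?gt_eqF // F0 mule0 adde0.
Qed.

Hypothesis hF0 : forall u : R, 0 <= u -> F u = 0%E -> u = 0.

Lemma orlicz_gt0 u : 0 < u -> (0 < F u)%E.
Proof.
move=> u0; rewrite lt_neqAle orlicz_ge0 ?ltW // andbT; apply/eqP => /esym /(hF0 (ltW u0)).
by move/eqP; rewrite gt_eqF.
Qed.

Hypothesis hD : ~ Delta2_0 F.

Lemma not_Delta2_0_jump (th rho eta : R) : 1 < th -> 0 < rho -> 0 < eta ->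
  exists u, [/\ 0 < u, u <= eta & (rho%:E * F u < F (th * u))%E].
Proof.
(* Otherwise iterating F (th u) <= rho F u m times, with th ^+ m >= 2, gives
   Delta_2 near 0 with constant (max rho 1) ^+ m. *)
move=> th1 rho0 eta0; apply: contrapT => noJump; apply: hD.
have bound u : 0 < u -> u <= eta -> (F (th * u) <= rho%:E * F u)%E.
  by move=> u0 ue; rewrite leNgt; apply/negP => hlt; apply: noJump; exists u.
have [m thm] := exists_expr_ge 2 th1.
have thm0 : 0 < th ^+ m by rewrite exprn_gt0 // (lt_trans ltr01).
pose K := Num.max rho 1; have K1 : 1 <= K by rewrite le_max lexx orbT.
exists (K ^+ m), (eta / th ^+ m); split; [|split; [|split]].
- by rewrite exprn_gt0 // (lt_le_trans ltr01).
- by rewrite divr_gt0.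
- by rewrite orlicz_gt0 // divr_gt0.
move=> u u0 uu0; have [->|unz] := eqVneq u 0; first by rewrite mulr0 orlicz0 mule0.
have upos : 0 < u by rewrite lt_neqAle eq_sym unz.
have iter j : (j <= m)%N -> (F (th ^+ j * u) <= (K ^+ j)%:E * F u)%E.
  elim: j => [|j IH] jm; first by rewrite !expr0 mul1r mul1e.
  have thj0 : 0 < th ^+ j * u by rewrite mulr_gt0 // exprn_gt0 // (lt_trans ltr01).
  have thj_eta : th ^+ j * u <= eta.
    have : th ^+ j <= th ^+ m by rewrite ler_weXn2l // ?ltW // ltnW.
    by move: uu0; rewrite ler_pdivlMr //; nra.
  rewrite exprS -mulrA (le_trans (bound _ thj0 thj_eta)) // exprS EFinM -muleA.
  rewrite (@le_trans _ _ (K%:E * F (th ^+ j * u))%E) //.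
    by rewrite lee_wpmul2r ?lee_fin ?le_max ?lexx // orlicz_ge0 // ltW.
  by rewrite lee_wpmul2l ?lee_fin ?(le_trans ler01) ?IH // ltnW.
apply: le_trans (iter m (leqnn m)); apply: orlicz_le; first lra.
by rewrite ler_pM2r.
Qed.

Lemma orlicz_small_near0 (c : R) : 0 < c -> exists2 eta, 0 < eta &
  forall v, 0 <= v <= eta -> F v \is a fin_num /\ fine (F v) <= c.
Proof.
(* F is finite at some b > 0 (were F = +oo on ]0, oo[, Delta_2 would hold),
   and convexity gives F v <= (v / b) F b on [0, b]. *)
move=> c0; have [b [b0 _ Fb]] := not_Delta2_0_jump (ltr1n R 2) ltr01 ltr01.
have Fbfin : F b \is a fin_num.
  rewrite ge0_fin_numE ?orlicz_ge0 ?ltW //.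
  by apply: lt_le_trans (leey (F (2 * b))); rewrite mul1e in Fb.
have B0 : 0 <= fine (F b) by rewrite fine_orlicz_ge0 ?ltW.
exists (Num.min b (c * b / (fine (F b) + 1))).
  by rewrite lt_min b0 !divr_gt0 ?mulr_gt0 //; lra.
move=> v /andP[v0]; rewrite le_min => /andP[vb vc].
have := orlicz_le_chord b0 (introT andP (conj v0 vb)).
rewrite -(fineK Fbfin) -EFinM => /fin_num_fine_le[]; rewrite ?orlicz_ge0 // => Fvfin Fvle.
split => //; apply: le_trans Fvle _; rewrite /= mulrAC ler_pdivrMr //.
move: vc; rewrite ler_pdivlMr; last lra.
nra.
Qed.

Lemma orlicz_jump_small (th rho c : R) : 1 < th -> 0 < rho -> 0 < c ->
  exists u, [/\ 0 < u, F u \is a fin_num, 0 < fine (F u),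
             rho * fine (F u) < fine (F (th * u)) & fine (F (th * u)) <= c].
Proof.
move=> th1 rho0 c0; have th0 : 0 < th by rewrite (lt_trans ltr01).
have [eta eta0 small] := orlicz_small_near0 c0.
have [u [u0 ueta jump]] := not_Delta2_0_jump th1 rho0 (divr_gt0 eta0 th0).
have thu0 : 0 <= th * u by rewrite mulr_ge0 ?ltW.
have [Fthfin Fthle] : F (th * u) \is a fin_num /\ fine (F (th * u)) <= c.
  by apply: small; rewrite thu0 mulrC -ler_pdivlMr.
have [Fufin _] := orlicz_fine_le (ltW u0) (ler_peMl (ltW u0) (ltW th1)) Fthfin.
exists u; split => //.
  by rewrite -lte_fin fineK // orlicz_gt0.
by rewrite -lte_fin EFinM !fineK.
Qed.

End OrliczFunction.

Lemma chi_split_le {R : realType} (lo mid hi n : nat) :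
  `|chi lo hi n| <= `|chi lo mid n + chi mid hi n| :> R.
Proof.
rewrite /chi; case: ifP => hn; last by rewrite normr0.
by repeat case: ifP => ?; rewrite ?addr0 ?add0r ?normr1 ?ler1n //; lia.
Qed.

Section RearrangementInvariant.
Variables (R : realType) (X : set (nat -> R)) (nrm : (nat -> R) -> R).
Hypothesis hri : ri_space X nrm.

Lemma ri_nrm0 : nrm (fun _ => 0) = 0.
Proof.
have := ri_nrm_hom hri 0 (ri_zero hri).
by under eq_fun do rewrite mul0r; rewrite normr0 mul0r.
Qed.

Lemma ri_le x y : X y -> (forall n, `|x n| <= `|y n|) -> nrm x <= nrm y.
Proof. by move=> Xy /(ri_ideal hri Xy) []. Qed.

Lemma chi1_X j : X (chi j j.+1).
Proof.
have [x [Xx xnz]] := ri_full hri; apply: (ri_ideal hri (ri_scale hri (x j)^-1 Xx) _).1.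
move=> n; rewrite /chi normrM normrV ?unitfE ?xnz //.
case: ifP => [/andP[jn nj]|_]; last by rewrite normr0 mulr_ge0.
have -> : n = j by apply/eqP; rewrite eqn_leq jn andbT -ltnS.
by rewrite mulVf ?normr_eq0 ?xnz ?normr1.
Qed.

Lemma chi_X lo hi : X (chi lo hi).
Proof.
elim: hi => [|hi IH].
  have -> : chi lo 0 = (fun _ => 0) :> (nat -> R) by apply/funext => n; rewrite /chi andbF.
  exact: ri_zero hri.
exact: (ri_ideal hri (ri_add hri IH (chi1_X hi)) (chi_split_le lo hi hi.+1)).1.
Qed.

Lemma nrm_chi_split lo mid hi : nrm (chi lo hi) <= nrm (chi lo mid) + nrm (chi mid hi).
Proof.
apply: le_trans (ri_nrm_tri hri (chi_X lo mid) (chi_X mid hi)).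
exact: ri_le (ri_add hri (chi_X lo mid) (chi_X mid hi)) (chi_split_le lo mid hi).
Qed.

Lemma nrm_chi_nil lo : nrm (chi lo lo) = 0.
Proof.
have -> : chi lo lo = (fun _ => 0) :> (nat -> R).
  by apply/funext => n; rewrite /chi; case: leqP => // /leq_gtF ->.
exact: ri_nrm0.
Qed.

Lemma nrm_chi1 j : nrm (chi j j.+1) = nrm (chi 0 1).
Proof.
apply: (ri_rearr hri (chi_X 0 1) _).2 => l l0.
have level k : [set n | l < `|chi k k.+1 n|] = if l < 1 then [set k] else set0.
  apply/seteqP; split => n /=; rewrite /chi.
    case: ifP => [/andP[kn nk]|_]; rewrite ?normr1 ?normr0 => hl.
      by rewrite hl /=; apply/eqP; rewrite eqn_leq kn andbT -ltnS.
    by have := lt_trans l0 hl; rewrite ltxx.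
  by case: ifP => [hl1 /= ->|_ []]; rewrite leqnn ltnSn normr1.
by rewrite !level; case: ifP => _; [exact: eq_card1 | exact: card_eq00].
Qed.

Lemma nrm_chi1_gt0 : 0 < nrm (chi 0 1).
Proof.
rewrite lt_neqAle (ri_nrm_ge0 hri (chi_X 0 1)) andbT eq_sym; apply/eqP.
by move=> /(ri_nrm_eq0 hri (chi_X 0 1)) /(congr1 (fun f => f 0%N)) /eqP; rewrite oner_eq0.
Qed.

Lemma nrm_chiS lo hi : nrm (chi lo hi.+1) <= nrm (chi lo hi) + nrm (chi 0 1).
Proof. by rewrite -(nrm_chi1 hi); exact: nrm_chi_split. Qed.

Hypothesis hoc : order_continuous X nrm.
Hypothesis hfat : fatou_property X nrm.

Lemma fatou_eventually (x : nat -> R) (xs : nat -> nat -> R) (M : R) :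
  (forall k n, 0 <= xs k n) -> (forall k n, xs k n <= xs k.+1 n) ->
  (forall n, exists k0, forall k, (k0 <= k)%N -> xs k n = x n) ->
  (forall k, X (xs k)) -> (forall k, nrm (xs k) <= M) -> X x /\ nrm x <= M.
Proof.
move=> xs0 xsS xsx Xxs xsM.
have cvg n : (fun k => xs k n) @ \oo --> (x n : R^o).
  by have [k0 hk0] := xsx n; apply: (@cvg_near_cst _ R^o); exists k0.
have [Xx [_ hc]] := hfat xs0 xsS cvg Xxs (ex_intro _ M xsM).
by split => //; apply: (cvgr_to_le hc); exact: nearW.
Qed.

Lemma order_continuous_small (x : nat -> R) (xs : nat -> nat -> R) (e : R) : X x ->
  (forall k n, 0 <= xs k n <= `|x n|) -> (forall k n, xs k.+1 n <= xs k n) ->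
  (forall k n, (n < k)%N -> xs k n = 0) -> 0 < e ->
  exists k, X (xs k) /\ nrm (xs k) < e.
Proof.
move=> Xx xs_dom xsS xs_nil e0.
have cvg n : (fun k => xs k n) @ \oo --> 0.
  by apply: (@cvg_near_cst _ R^o); exists n.+1 => // k /= /xs_nil.
have [N _ hN] := cvgr0_norm_lt _ (hoc Xx xs_dom xsS cvg) _ e0.
have XxsN : X (xs N).
  by apply: (ri_ideal hri Xx _).1 => n; have /andP[h0 h1] := xs_dom N n; rewrite ger0_norm.
by exists N; split => //; move: (hN N (leqnn N)) => /=; rewrite ger0_norm // (ri_nrm_ge0 hri XxsN).
Qed.

Lemma tail_small (x : nat -> R) (e : R) : X x -> (forall n, 0 <= x n) -> 0 < e ->
  exists m, X (tail m x) /\ nrm (tail m x) < e.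
Proof.
move=> Xx x0; apply: order_continuous_small Xx _ _ _ => [k n|k n|k n kn].
- by rewrite /tail ger0_norm //; case: ifP; rewrite ?lexx ?x0.
- by rewrite /tail; do 2 case: ifP => //; rewrite ?lexx ?x0 //; lia.
- by rewrite /tail leqNgt kn.
Qed.

Lemma nrm_chi_unbounded lo (c : R) : exists L, c < nrm (chi lo (lo + L)).
Proof.
(* Otherwise Fatou puts the indicator of [lo, oo) in X, and its tails could not
   tend to 0 as each dominates a unit vector. *)
apply: contrapT => bounded.
have le_c L : nrm (chi lo (lo + L)) <= c.
  by rewrite leNgt; apply/negP => hL; apply: bounded; exists L.
pose ray := tail lo (fun _ => 1 : R).
have ray0 n : 0 <= ray n by rewrite /ray /tail; case: ifP.
have [Xray _] : X ray /\ nrm ray <= c.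
  apply: (fatou_eventually (xs := fun L => chi lo (lo + L))) => // [L n|L n|n|L].
  - by rewrite /chi; case: ifP.
  - by rewrite /chi; repeat case: ifP => ? //; lia.
  - exists n.+1 => L hL; rewrite /chi /ray /tail.
    by repeat case: ifP => ? //; lia.
  - exact: chi_X.
have [m [Xt small]] := tail_small Xray ray0 nrm_chi1_gt0.
suff : nrm (chi (lo + m) (lo + m).+1) <= nrm (tail m ray) by rewrite nrm_chi1 leNgt small.
apply: ri_le => // n; rewrite /chi /ray /tail.
by repeat case: ifP => ? //; rewrite ?normr1 ?normr0 ?ler01 ?lexx //; lia.
Qed.

Lemma exists_block_nrm_between lo (f t : R) : 0 < f -> 0 < t -> f * nrm (chi 0 1) <= t ->
  exists2 hi, (lo < hi)%N & t <= f * nrm (chi lo hi) <= 2 * t.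
Proof.
move=> f0 t0 f_nu.
have [L L0 /andP[above below]] :
    exists2 L, (0 < L)%N & t <= f * nrm (chi lo (lo + L)) <= t + f * nrm (chi 0 1).
  apply: exists_crossing => [|L|].
  - by rewrite addn0 nrm_chi_nil mulr0.
  - by rewrite addnS -mulrDr ler_wpM2l ?nrm_chiS // ltW.
  - have [L hL] := nrm_chi_unbounded lo (t / f); exists L.
    by rewrite mulrC -ler_pdivrMr // ltW.
by exists (lo + L); [lia | rewrite above /=; lra].
Qed.

Lemma inXe_le (g h : nat -> \bar R) : (forall n, (0 <= g n)%E /\ (g n <= h n)%E) ->
  inXe X h -> inXe X g /\ nrmXe nrm g <= nrmXe nrm h.
Proof.
move=> gh [hfin Xh].
have gfin n : g n \is a fin_num /\ fine (g n) <= fine (h n).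
  by have [g0 gle] := gh n; apply: fin_num_fine_le.
have dom n : `|fine (g n)| <= `|fine (h n)|.
  have [g0 _] := gh n; have g0' : 0 <= fine (g n) by rewrite fine_ge0.
  by rewrite !ger0_norm ?(gfin n).2 // (le_trans g0' (gfin n).2).
have [Xg le] := ri_ideal hri Xh dom.
by split => //; split => // n; exact: (gfin n).1.
Qed.

End RearrangementInvariant.

Section Blocks.
Variable a : nat -> nat.
Hypothesis a0 : a 0 = 0%N.
Hypothesis a_lt : forall k, (a k < a k.+1)%N.

Lemma leq_block_start k : (k <= a k)%N.
Proof. by elim: k => [|k IH] //; exact: leq_ltn_trans IH (a_lt k). Qed.

Lemma block_exists n : exists k, (n < a k.+1)%N.
Proof. by exists n; rewrite (leq_trans _ (leq_block_start n.+1)). Qed.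

Definition block n := ex_minn (block_exists n).

Lemma block_bounds n : (a (block n) <= n < a (block n).+1)%N.
Proof.
rewrite /block; case: ex_minnP => [[|k]] -> // kmin; rewrite ?a0 // andbT.
by rewrite leqNgt; apply/negP => /kmin; rewrite ltnn.
Qed.

Lemma block_eq k n : (a k <= n < a k.+1)%N -> block n = k.
Proof.
move=> /andP[akn nak]; have /andP[abn nab] := block_bounds n.
have mono := homo_leq leqnn leq_trans (fun i => ltnW (a_lt i)).
case: (ltngtP (block n) k) => // [lt|gt].
- by have := mono _ _ lt; lia.
- by have := mono _ _ gt; lia.
Qed.

Lemma block_mem k n : (a k <= n < a k.+1)%N = (block n == k).
Proof. by apply/idP/eqP => [/block_eq | <-] //; exact: block_bounds. Qed.

End Blocks.

Section Construction.
Variables (R : realType) (X : set (nat -> R)) (nrm : (nat -> R) -> R) (F : R -> \bar R).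
Hypothesis hri : ri_space X nrm.
Hypothesis hoc : order_continuous X nrm.
Hypothesis hfat : fatou_property X nrm.
Hypothesis hF : orlicz F.
Hypothesis hF0 : forall u : R, 0 <= u -> F u = 0%E -> u = 0.

(* [lo, hi) is the k-th block, on which the function will equal u; on its far
   part [k.+2 * lo, hi) Cesaro means of such a function are at least
   u / theta k (theta_inv_le). *)
Record block_step (k lo : nat) (u : R) (hi : nat) : Prop := BlockStep {
  step_u_gt0 : 0 < u;
  step_lt : (lo < hi)%N;
  step_Fu_fin : F u \is a fin_num;
  step_small : fine (F u) * nrm (chi lo hi) <= (2 ^+ k.+1)^-1;
  step_large : 2^-1 < fine (F (theta k * u)) * nrm (chi (k.+2 * lo) hi) }.

Hypothesis hD : ~ Delta2_0 F.

Lemma block_step_exists k lo : exists u hi, block_step k lo u hi.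
Proof.
(* Take u with F (theta k u) > rho F u, rho = 2 ^+ k.+2, and F (theta k u) so
   small that the initial part [lo, k.+2 * lo) of the block costs at most
   1 / rho; then end the block where the norm of F u on it first exceeds 1 / rho. *)
pose rho : R := 2 ^+ k.+2; pose P := nrm (chi lo (k.+2 * lo)); pose nu := nrm (chi 0 1).
have rho4 : 4 <= rho.
  rewrite /rho !exprS; have : 1 <= (2 : R) ^+ k by rewrite exprn_ege1 // ler1n.
  lra.
have rho_inv : rho * rho^-1 = 1 by rewrite divff // gt_eqF //; lra.
have P0 : 0 <= P := ri_nrm_ge0 hri (chi_X hri _ _).
have nu0 : 0 < nu := nrm_chi1_gt0 hri.
have c0 : 0 < (rho * (P + nu))^-1 by rewrite invr_gt0 mulr_gt0 //; lra.
have [u [u0 Fufin fu0 jump ft_small]] :=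
  orlicz_jump_small hF hF0 hD (theta_gt1 R k) (lt_le_trans (ltr0n R 4) rho4) c0.
set fu := fine (F u) in fu0 jump *; set ft := fine (F (theta k * u)) in jump ft_small *.
have ft0 : 0 <= ft by nra.
have ft_sum : ft * (P + nu) <= rho^-1.
  have -> : rho^-1 = (rho * (P + nu))^-1 * (P + nu) by field; apply/andP; split; lra.
  by rewrite ler_wpM2r //; lra.
have [ftP ftnu] : ft * P <= rho^-1 /\ ft * nu <= rho^-1 by split; nra.
have funu : fu * nu <= rho^-1.
  by apply: le_trans ftnu; rewrite ler_wpM2r ?ltW //; nra.
have rho_inv_gt0 : 0 < rho^-1 by rewrite invr_gt0; lra.
have [hi lohi /andP[crossed not_far]] :=
  exists_block_nrm_between hri hoc hfat lo fu0 rho_inv_gt0 funu.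
exists u, hi; split => //; rewrite -/fu -/ft.
- have -> : (2 ^+ k.+1)^-1 = 2 * rho^-1 :> R.
    by rewrite /rho [in RHS]exprS invfM mulrA mulfV ?mul1r.
  exact: not_far.
- have N0 : 0 <= nrm (chi lo hi) := ri_nrm_ge0 hri (chi_X hri _ _).
  have := nrm_chi_split hri lo (k.+2 * lo) hi; rewrite -/P => split_far.
  have : rho * fu * nrm (chi lo hi) <= ft * nrm (chi lo hi) by rewrite ler_wpM2r // ltW.
  have : rho * rho^-1 <= rho * (fu * nrm (chi lo hi)) by rewrite ler_wpM2l //; lra.
  have : ft * nrm (chi lo hi) <= ft * P + ft * nrm (chi (k.+2 * lo) hi).
    by rewrite -mulrDr ler_wpM2l.
  have : rho^-1 <= 4^-1 by rewrite lef_pV2 ?posrE //; lra.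
  lra.
Qed.

Lemma block_sequence_exists : exists (u : nat -> R) (a : nat -> nat),
  a 0 = 0%N /\ forall k, block_step k (a k) (u k) (a k.+1).
Proof.
have step p : exists q : R * nat, block_step p.1 p.2 q.1 q.2.
  by case: p => k lo; have [u [hi h]] := block_step_exists k lo; exists (u, hi).
have [f hf] := choice step.
pose fix a k := if k is k'.+1 then (f (k', a k')).2 else 0%N.
by exists (fun k => (f (k, a k)).1), a; split => // k; exact: hf (k, a k).
Qed.

Hypothesis hcl : CL_closed_cesaro X nrm F.
Variables (u : nat -> R) (a : nat -> nat).
Hypothesis a0 : a 0 = 0%N.
Hypothesis hstep : forall k, block_step k (a k) (u k) (a k.+1).

Let a_lt k : (a k < a k.+1)%N := step_lt (hstep k).
Let blk := block a_lt.

Definition wblock n := u (blk n).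

Lemma wblock_gt0 n : 0 < wblock n.
Proof. exact: step_u_gt0 (hstep _). Qed.

Definition Fw_trunc K n := if (blk n < K)%N then fine (F (wblock n)) else 0.

Lemma Fw_truncS K :
  Fw_trunc K.+1 = fun n => Fw_trunc K n + fine (F (u K)) * chi (a K) (a K.+1) n.
Proof.
apply/funext => n; rewrite /Fw_trunc /wblock /chi (block_mem a0) -/blk ltnS leq_eqVlt.
by case: eqP => [->|_]; rewrite ?ltnn /= ?mulr1 ?mulr0 ?add0r ?addr0.
Qed.

Lemma Fw_trunc_X K : X (Fw_trunc K) /\ nrm (Fw_trunc K) <= 1 - (2 ^+ K)^-1.
Proof.
elim: K => [|K [XK nK]].
  have -> : Fw_trunc 0 = fun _ => 0 by apply/funext => n.
  by rewrite (ri_nrm0 hri) expr0 invr1 subrr; split => //; exact: ri_zero hri.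
have uK0 := step_u_gt0 (hstep K).
rewrite Fw_truncS; have Xc := ri_scale hri (fine (F (u K))) (chi_X hri (a K) (a K.+1)).
split; first exact: (ri_add hri XK Xc).
apply: le_trans (ri_nrm_tri hri XK Xc) _.
rewrite (ri_nrm_hom hri _ (chi_X hri _ _)) ger0_norm; last first.
  exact: (fine_orlicz_ge0 hF (ltW uK0)).
have half : (2 ^+ K)^-1 = 2 * (2 ^+ K.+1)^-1 :> R.
  by rewrite [in RHS]exprS invfM mulrA mulfV ?mul1r.
have := step_small (hstep K); rewrite half in nK; lra.
Qed.

Lemma Fw_X : X (fun n => fine (F (wblock n))) /\ nrm (fun n => fine (F (wblock n))) <= 1.
Proof.
apply: (fatou_eventually hfat (xs := Fw_trunc)) => [K n|K n|n|K|K].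
- by rewrite /Fw_trunc; case: ifP => // _; rewrite (fine_orlicz_ge0 hF) // ltW // wblock_gt0.
- rewrite Fw_truncS lerDl mulr_ge0 //; last by rewrite /chi; case: ifP.
  exact: (fine_orlicz_ge0 hF (ltW (step_u_gt0 (hstep K)))).
- by exists (blk n).+1 => K hK; rewrite /Fw_trunc hK.
- exact: (Fw_trunc_X K).1.
- by apply: le_trans (Fw_trunc_X K).2 _; rewrite gerDl oppr_le0 invr_ge0 exprn_ge0.
Qed.

Lemma wblock_CL : CL_class X nrm F wblock.
Proof.
have Fw_abs : (fun n => F `|wblock n|) = (fun n => F (wblock n)).
  by apply/funext => n; rewrite ger0_norm // ltW // wblock_gt0.
have Fw_fin n : F (wblock n) \is a fin_num := step_Fu_fin (hstep _).
have [Xw nw] := Fw_X.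
split; last by rewrite Fw_abs.
exists 1; split => //; under eq_fun do rewrite divr1; rewrite Fw_abs.
by split.
Qed.

Lemma Fcesaro_tail_small : exists M,
  inXe X (fun n => F (cesaro (abss (tail M wblock)) n)) /\
  nrmXe nrm (fun n => F (cesaro (abss (tail M wblock)) n)) < 1.
Proof.
have [Cfin XC] := (hcl wblock_CL).2.
pose H m n := fine (F (cesaro (abss (tail m wblock)) n)).
have tail_le m n : cesaro (abss (tail m wblock)) n <= `|cesaro (abss wblock) n|.
  rewrite ger0_norm ?cesaro_abss_ge0 //; apply: cesaro_le => i.
  by rewrite /abss /tail; case: ifP; rewrite ?normr0.
have Hfin m n := orlicz_fine_le hF (cesaro_abss_ge0 _ _) (tail_le m n) (Cfin n).
have [M [XM nM]] : exists M, X (H M) /\ nrm (H M) < 1.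
  apply: (order_continuous_small hri hoc XC) => // [m n|m n|m n mn].
  - rewrite (fine_orlicz_ge0 hF) ?cesaro_abss_ge0 //=.
    exact: le_trans (Hfin m n).2 (ler_norm _).
  - apply: (orlicz_fine_le hF (cesaro_abss_ge0 _ _) _ (Hfin m n).1).2.
    apply: cesaro_le => i; rewrite /abss /tail.
    by repeat case: ifP => ? //; rewrite ?normr0 //; lia.
  - rewrite /H (_ : cesaro _ n = 0) ?orlicz0 // /Defs.cesaro big1 ?mulr0 // => i _.
    rewrite /abss /tail ifF ?normr0 //; apply/negbTE.
    by rewrite -ltnNge (leq_trans (ltn_ord i) mn).
by exists M; split => //; split => // n; exact: (Hfin M n).1.
Qed.

Variable M : nat.
Hypothesis XM : inXe X (fun n => F (cesaro (abss (tail M wblock)) n)).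
Hypothesis nM : nrmXe nrm (fun n => F (cesaro (abss (tail M wblock)) n)) < 1.

(* Coordinate i of b is spread over the blocks k with logn 2 k.+1 = i, and
   there are infinitely many such k (logn2_fiber). *)
Definition emb (b : nat -> R) n := b (logn 2 (blk n).+1) * tail M wblock n.

Lemma emb_cesaro_le b s : (forall i, `|b i| <= s) ->
  forall n, cesaro (abss (emb b)) n <= s * cesaro (abss (tail M wblock)) n.
Proof.
move=> bs n; rewrite /Defs.cesaro mulrCA ler_wpM2l ?invr_ge0 // mulr_sumr.
by apply: ler_sum => i _; rewrite /abss /emb normrM ler_wpM2r.
Qed.

Lemma emb_adm_gt b l : linf b -> linf_norm b < l ->
  XF_adm X nrm F (cesaro (abss (emb b))) l.
Proof.
move=> hb lt; have s0 : 0 <= linf_norm b := le_trans (normr_ge0 _) (linf_norm_ub hb 0).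
have l0 : 0 < l := le_lt_trans s0 lt.
have dom n : (0 <= F (`|cesaro (abss (emb b)) n| / l))%E /\
    (F (`|cesaro (abss (emb b)) n| / l) <= F (cesaro (abss (tail M wblock)) n))%E.
  split; first by rewrite (orlicz_ge0 hF) // divr_ge0 // ltW.
  apply: (orlicz_le hF); first by rewrite divr_ge0 // ltW.
  rewrite ger0_norm ?cesaro_abss_ge0 // ler_pdivrMr //.
  apply: le_trans (emb_cesaro_le (linf_norm_ub hb) n) _.
  by rewrite mulrC ler_wpM2l ?cesaro_abss_ge0 // ltW.
have [adm nadm] := inXe_le hri dom XM.
by split => //; split => //; apply: le_trans nadm (ltW nM).
Qed.

Lemma emb_cesaro_block b k n : (M <= k)%N -> (k.+2 * a k <= n < a k.+1)%N ->
  `|b (logn 2 k.+1)| * u k / theta k <= cesaro (abss (emb b)) n.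
Proof.
move=> Mk /andP[lo_n n_hi]; have uk0 := step_u_gt0 (hstep k).
have ak_n : (a k <= n)%N := leq_trans (leq_pmull _ (ltn0Sn _)) lo_n.
apply: le_trans (cesaro_ge_block (v := `|b (logn 2 k.+1)| * u k) ak_n _ _)
  => [|m|m /andP[akm mn]].
- by rewrite mulrC ler_wpM2r ?theta_inv_le // mulr_ge0 // ltW.
- by rewrite /abss.
have hm : (a k <= m < a k.+1)%N by rewrite akm (leq_ltn_trans mn).
have Mm : (M <= m)%N := leq_trans Mk (leq_trans (leq_block_start a_lt k) akm).
by rewrite /abss /emb /tail /wblock /blk (block_eq a0 a_lt hm) Mm normrM (ger0_norm (ltW uk0)).
Qed.

Lemma emb_adm_ge b l : linf b -> XF_adm X nrm F (cesaro (abss (emb b))) l ->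
  linf_norm b <= l.
Proof.
move=> hb [l0 [[gfin Xg] _]]; rewrite leNgt; apply/negP => /linf_norm_approx[i bi].
set g := fun n => fine (F (`|cesaro (abss (emb b)) n| / l)) in Xg.
have g0 n : 0 <= g n by rewrite (fine_orlicz_ge0 hF) // divr_ge0 // ltW.
have half_gt0 : 0 < 2^-1 :> R by rewrite invr_gt0.
have [m0 [Xt tsmall]] := tail_small hri hoc Xg g0 half_gt0.
have c1 : 1 < `|b i| / l by rewrite ltr_pdivlMr // mul1r.
have [K0 hK0] := theta_sq_le c1.
have [k hk logk] := logn2_fiber i (K0 + m0 + M).
have [K0k Mk] : (K0 <= k)%N /\ (M <= k)%N by split; lia.
have th0 : 0 < theta k := lt_trans ltr01 (theta_gt1 R k).
have uk0 := step_u_gt0 (hstep k).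
have thu0 : 0 <= theta k * u k by rewrite mulr_ge0 ?ltW.
pose ft := fine (F (theta k * u k)); have ft0 : 0 <= ft := fine_orlicz_ge0 hF thu0.
have dom n : `|ft * chi (k.+2 * a k) (a k.+1) n| <= `|tail m0 g n|.
  rewrite /chi; case: ifP => [hn|_]; last by rewrite mulr0 normr0.
  have m0n : (m0 <= n)%N.
    have := leq_block_start a_lt k; have := leq_pmull (a k) (ltn0Sn k.+1).
    by case/andP: hn; lia.
  rewrite mulr1 /tail m0n !ger0_norm ?g0 //.
  apply: (orlicz_fine_le hF thu0 _ (gfin n)).2.
  have := emb_cesaro_block b Mk hn; rewrite logk => lowb.
  rewrite ger0_norm ?cesaro_abss_ge0 // ler_pdivlMr //; apply: le_trans lowb.
  have := hK0 k K0k; rewrite ler_pdivlMr // ler_pdivlMr // => thK.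
  nra.
have := ri_le hri Xt dom; rewrite (ri_nrm_hom hri _ (chi_X hri _ _)) ger0_norm //.
by have := step_large (hstep k); rewrite -/ft; lra.
Qed.

Lemma CXF_norm_emb b : linf b -> CXF_norm X nrm F (emb b) = linf_norm b.
Proof. by move=> hb; apply: inf_ray => l; [exact: emb_adm_gt | exact: emb_adm_ge]. Qed.

Lemma emb_lattice_isometry :
  contains_lattice_isometric_linf (CXF X nrm F) (CXF_norm X nrm F).
Proof.
exists emb; split; [|split; [|split; [|split]]].
- by move=> b hb; exists (linf_norm b + 1); apply: emb_adm_gt; rewrite ?ltrDl.
- by move=> b1 b2 _ _; apply/funext => n; rewrite /emb mulrDl.
- by move=> c b _; apply/funext => n; rewrite /emb mulrA.
- move=> b1 b2 _ _; apply/funext => n; rewrite /emb maxr_pMl // /tail.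
  by case: ifP => // _; exact: ltW (wblock_gt0 n).
- exact: CXF_norm_emb.
Qed.

End Construction.

Theorem corollary4p3 (R : realType) (X : set (nat -> R)) (nrm : (nat -> R) -> R)
  (F : R -> \bar R) :
  ri_space X nrm -> order_continuous X nrm -> fatou_property X nrm ->
  orlicz F -> CL_closed_cesaro X nrm F ->
  (forall u : R, 0 <= u -> F u = 0%E -> u = 0) ->
  ~ Delta2_0 F ->
  contains_lattice_isometric_linf (CXF X nrm F) (CXF_norm X nrm F).
Proof.
move=> hri hoc hfat hF hcl hF0 hD.
have [u [a [a0 hstep]]] := block_sequence_exists hri hoc hfat hF hF0 hD.
have [M [XM nM]] := Fcesaro_tail_small hri hoc hfat hF hcl a0 hstep.
exact: (emb_lattice_isometry hri hoc hF a0 XM nM).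
Qed.
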